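(* Let $L\ge2$ and $0\le p<1$, and let $(\eta_n)_{n\ge0}$ be the Markov chain on $\{0,1\}^L$ with transition function $Q$, started from the stationary distribution $\pi(\omega)=Z^{-1}\prod_{j=0}^{|\omega|-1}c_j/c_{L-j-1}$. Define $\rho_n=\mathbb E_\pi[\eta_0(0)\eta_n(0)]$ and $\bar\rho_n=\rho_n-\frac14$. Then $\rho_0=\frac12$, $\rho_1=\rho_2=\dots=\rho_{L-1}$, for every $n\ge L$ $$\bar\rho_n=\frac{2p-1}{L}\sum_{j=1}^L\bar\rho_{n-j},$$ and $\bar\rho_n\to0$ exponentially fast as $n\to\infty$ (i.e. $|\bar\rho_n|\le Cr^n$ for some $C<\infty$, $r<1$).
   Context: $\Omega=\{0,1\}^L$, $\omega=(\omega(0),\dots,\omega(L-1))$, $|\omega|=\sum_j\omega(j)$. The transition function $Q$ is $Q\big(\eta,(\eta(1),\dots,\eta(L-1),s)\big)=\frac1L\big(|\eta|p+(L-|\eta|)(1-p)\big)$ for $s=1$, $=\frac1L\big((L-|\eta|)p+|\eta|(1-p)\big)$ for $s=0$, and $Q(\eta,\omega)=0$ otherwise. $c_j=(1-p)(1-\frac jL)+\frac jLp$ and $Z$ is a normalizing constant; this $\pi$ is stationary for $Q$. *)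

From HB Require Import structures.
From mathcomp Require Import all_boot all_order all_algebra.
Set Implicit Arguments. Unset Strict Implicit. Unset Printing Implicit Defensive.
Import Order.TTheory GRing.Theory Num.Theory.
Local Open Scope ring_scope.

Section Chain.
Variable R : rcfType.
Variable L : nat.
Variable p : R.

Definition config := {ffun 'I_L -> bool}.

Definition wt (w : config) : nat := (\sum_(j < L) (w j : nat))%N.

(* (eta(1),...,eta(L-1),s) *)
Definition shift (e : config) (s : bool) : config :=
  [ffun j : 'I_L => match (insub j.+1 : option 'I_L) with Some k => e k | None => s end].

Definition Q (e w : config) : R :=
  if w == shift e true then
    (L%:R)^-1 * ((wt e)%:R * p + (L - wt e)%:R * (1 - p))
  else if w == shift e false then
    (L%:R)^-1 * ((L - wt e)%:R * p + (wt e)%:R * (1 - p))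
  else 0.

Fixpoint Qn (n : nat) (e w : config) : R :=
  match n with
  | 0 => (e == w)%:R
  | n'.+1 => \sum_(z : config) Qn n' e z * Q z w
  end.

Definition c (j : nat) : R :=
  (1 - p) * (1 - j%:R / L%:R) + j%:R / L%:R * p.

Definition piw (w : config) : R :=
  \prod_(j < wt w) (c j / c (L - j - 1)).

Definition Z : R := \sum_(w : config) piw w.

Definition pi (w : config) : R := piw w / Z.

(* omega(0) as a real number (0 if L = 0) *)
Definition at0 (w : config) : R :=
  match (insub 0%N : option 'I_L) with Some i => (w i : nat)%:R | None => 0 end.

Definition rho (n : nat) : R :=
  \sum_(e : config) \sum_(w : config) pi e * at0 e * Qn n e w * at0 w.

Definition rhobar (n : nat) : R := rho n - 4^-1.

End Chain.

From Pilot Require Import Defs.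
From HB Require Import structures.
From mathcomp Require Import all_boot all_order all_algebra fingroup perm.
From mathcomp Require Import ring lra zify.
From Stdlib Require Import FunctionalExtensionality.
Set Implicit Arguments. Unset Strict Implicit. Unset Printing Implicit Defensive.
Import Order.TTheory GRing.Theory Num.Theory.
Local Open Scope ring_scope.

(* The chain shifts its window and appends a fresh bit whose law is affine in
   the weight |eta|.  So the transition operator maps the coordinate eta(k) to
   eta(k+1) for k < L-1, and eta(L-1) to (1-p) + (2p-1)/L (eta(0)+...+eta(L-1)).
   Starting from eta(0) and integrating against eta_0(0) under pi, the first
   L-1 steps only move the coordinate (so rho_1 = ... = rho_{L-1}, as pi depends
   only on |omega| and is therefore invariant under permuting coordinates), and
   every further step yields the recurrence, where E_pi[eta(0)] = 1/2 because pi
   is also invariant under flipping all bits.  Finally a recurrence with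
   coefficient a/L, -1 <= a < 1, decays geometrically: substituting the
   recurrence at n-1 into the one at n bounds |rhobar_n| by theta < 1 times the
   maximum of the L+1 previous terms. *)

Section GeometricDecay.
Variable R : realFieldType.

Lemma bernoulli_ineq (t : R) (n : nat) :
  0 <= t -> t <= 1 -> 1 - n%:R * t <= (1 - t) ^+ n.
Proof.
move=> t0 t1; elim: n => [|n IH]; first by rewrite mul0r subr0 expr0.
rewrite exprS -natr1; apply: le_trans (_ : (1 - t) * (1 - n%:R * t) <= _).
  have : 0 <= n%:R * (t * t) by rewrite !mulr_ge0.
  lra.
by apply: ler_wpM2l; lra.
Qed.

Lemma block_contraction_decay (y : nat -> R) (N : nat) (th B : R) :
  (0 < N)%N -> 0 <= th -> th <= 1 -> (forall k, (k < N)%N -> `|y k| <= B) ->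
  (forall n (M : R), (N <= n)%N -> (forall k, (n - N <= k < n)%N -> `|y k| <= M) ->
     `|y n| <= th * M) ->
  forall n, `|y n| <= B * th ^+ (n %/ N).
Proof.
move=> N0 th0 th1 hB hstep n.
have B0 : 0 <= B := le_trans (normr_ge0 _) (hB 0%N N0).
elim/ltn_ind: n => n IH.
have [hn|hn] := ltnP n N; first by rewrite divn_small // expr0 mulr1 hB.
apply: le_trans (hstep n (B * th ^+ ((n - N) %/ N)) hn _) _.
  move=> k /andP[hk1 hk2]; apply: le_trans (IH k hk2) _.
  by rewrite ler_wpM2l // ler_wiXn2l // leq_div2r.
have -> : (n %/ N = ((n - N) %/ N).+1)%N.
  by rewrite -{1}(subnK hn) divnDr ?dvdnn // divnn N0 addn1.
by rewrite exprS mulrCA.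
Qed.

Lemma block_decay_geometric (y : nat -> R) (N : nat) (th B : R) :
  (0 < N)%N -> 0 <= th -> th < 1 -> (forall n, `|y n| <= B * th ^+ (n %/ N)) ->
  exists C r : R, [/\ 0 <= r, r < 1 & forall n, `|y n| <= C * r ^+ n].
Proof.
move=> N0 th0 th1 hy.
have B0 : 0 <= B by have := hy 0%N; rewrite div0n expr0 mulr1; apply: le_trans.
(* r = 1 - (1 - th)/(N+1) satisfies th <= r^N by Bernoulli's inequality. *)
set x : R := N.+1%:R; set u := (1 - th) / x; set r := 1 - u.
have x0 : 0 < x by rewrite ltr0n.
have ux : u * x = 1 - th by rewrite mulfVK ?gt_eqF.
have u0 : 0 < u by rewrite divr_gt0 // subr_gt0.
have x1 : 1 < x by rewrite ltr1n ltnS.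
have u1 : u < 1 by rewrite -(ltr_pM2r x0) mul1r ux; lra.
have r0 : 0 < r by rewrite subr_gt0.
have r1 : r < 1 by rewrite /r; lra.
have rN : th <= r ^+ N.
  apply: le_trans (bernoulli_ineq N (ltW u0) (ltW u1)).
  have : N%:R * u <= u * x by rewrite mulrC ler_wpM2l ?ler_nat ?ltW.
  lra.
exists (B / r ^+ N), r; split; rewrite ?ltW //.
move=> n; apply: le_trans (hy n) _.
rewrite -mulrA ler_wpM2l // mulrC ler_pdivlMr ?exprn_gt0 //.
apply: le_trans (_ : r ^+ (N * (n %/ N)) * r ^+ N <= _).
  rewrite ler_wpM2r ?exprn_ge0 ?(ltW r0) // exprM.
  by apply: lerXn2r => //; rewrite nnegrE exprn_ge0 // ltW.
rewrite -exprD ler_wiXn2l ?ltW //.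
by rewrite [leqLHS](divn_eq n N) mulnC leq_add2l ltnW // ltn_pmod.
Qed.

Lemma two_step_factor_lt1 (L : nat) (a d : R) :
  (2 <= L)%N -> -1 <= a -> a < 1 -> d = a / L%:R ->
  `|d| * (`|1 + d| * (L.-1)%:R + `|d|) < 1.
Proof.
move=> L2 a1 a2 ->.
set x : R := L%:R.
have x2 : 2 <= x by rewrite /x ler_nat.
have x0 : x != 0 by rewrite gt_eqF //; lra.
have hL1 : (L.-1)%:R = x - 1 by rewrite /x -subn1 natrB //; lia.
have h1d : 1 + a / x = (x + a) / x by field.
have -> : `|1 + a / x| = (x + a) / x by rewrite h1d ger0_norm // divr_ge0 //; lra.
rewrite hL1 normrM normfV (ger0_norm (ler0n _ _)).
have -> : `|a| / x * ((x + a) / x * (x - 1) + `|a| / x)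
          = `|a| * ((x + a) * (x - 1) + `|a|) / (x * x) by field.
rewrite ltr_pdivrMr ?mul1r; last by apply: mulr_gt0; lra.
have [ha|ha] := lerP 0 a.
  rewrite ger0_norm //.
  have : 0 < (1 - a) * x * (x + a) by rewrite !mulr_gt0 //; lra.
  have -> : (1 - a) * x * (x + a) = x * x - a * ((x + a) * (x - 1) + a) by ring.
  lra.
rewrite ltr0_norm //.
have h3 : 0 <= (1 + a) * (x * x) by rewrite mulr_ge0 ?mulr_ge0 //; lra.
have h4 : 0 <= a * a * (x - 2) by rewrite mulr_ge0 ?mulr_le0 //; lra.
have h5 : 0 < - a * x by rewrite mulr_gt0 //; lra.
have -> : - a * ((x + a) * (x - 1) + - a)
   = x * x - ((1 + a) * (x * x) + a * a * (x - 2) + - a * x) by ring.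
lra.
Qed.

Lemma linear_recurrence_decay (y : nat -> R) (L : nat) (a : R) :
  (2 <= L)%N -> -1 <= a -> a < 1 ->
  (forall n, (L <= n)%N -> y n = a / L%:R * \sum_(1 <= j < L.+1) y (n - j)%N) ->
  exists C r : R, [/\ 0 <= r, r < 1 & forall n, `|y n| <= C * r ^+ n].
Proof.
move=> L2 a1 a2 hrec.
set d := a / L%:R in hrec.
have th1 := two_step_factor_lt1 L2 a1 a2 (erefl d).
clearbody d.
set th := _ * _ in th1.
have th0 : 0 <= th by rewrite mulr_ge0 ?addr_ge0 ?mulr_ge0.
apply: (block_decay_geometric (N := L.+1) (B := \sum_(k < L.+1) `|y k|) _ th0 th1) => //.
apply: block_contraction_decay; rewrite ?(ltW th1) //.
  move=> k hk; rewrite (bigD1 (Ordinal hk)) //= lerDl.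
  by apply: sumr_ge0 => i _.
move=> n M hn hM.
set S := \sum_(2 <= j < L.+1) y (n - j)%N.
(* Substituting the recurrence at n - 1 into the one at n eliminates y (n - 1);
   the one-step bound |a| alone would not contract when a = -1. *)
have yn : y n = d * (y (n - 1)%N + S).
  by rewrite {1}hrec 1?(big_ltn (_ : 1 < L.+1)%N) //; lia.
have yn1 : y (n - 1)%N = d * (S + y (n - L.+1)%N).
  rewrite {1}hrec; last lia.
  rewrite big_nat_recr /=; last lia.
  rewrite /S [in RHS]big_add1 /= (_ : (n - 1 - L = n - L.+1)%N); last lia.
  by congr (_ * (_ + _)); apply: eq_big_nat => i hi; congr y; lia.
have hS : `|S| <= (L.-1)%:R * M.
  apply: le_trans (ler_norm_sum _ _ _) _.
  apply: le_trans (_ : \sum_(2 <= j < L.+1) M <= _).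
    by apply: ler_sum_nat => j /andP[h1 h2]; apply: hM; lia.
  by rewrite sumr_const_nat mulr_natl (_ : (L.+1 - 2 = L.-1)%N) //; lia.
have hlast : `|y (n - L.+1)%N| <= M by apply: hM; lia.
have -> : y n = d * ((1 + d) * S + d * y (n - L.+1)%N).
  by rewrite yn yn1; ring.
rewrite normrM /th -[X in _ <= X]mulrA ler_wpM2l //.
rewrite [X in _ <= X]mulrDl -[_ * _ * M]mulrA.
apply: le_trans (ler_normD _ _) _.
by rewrite !normrM lerD // ler_wpM2l.
Qed.

End GeometricDecay.

Section ShiftChain.
Variable R : rcfType.
Variables (L : nat) (p : R).
Hypothesis hL : (2 <= L)%N.

Local Notation config := (config L).

(* [at0] is [bit 0] by conversion. *)
Definition bit (k : nat) (w : config) : R :=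
  match (insub k : option 'I_L) with Some i => (w i : nat)%:R | None => 0 end.

Definition prob1 (e : config) : R :=
  (L%:R)^-1 * ((wt e)%:R * p + (L - wt e)%:R * (1 - p)).
Definition prob0 (e : config) : R :=
  (L%:R)^-1 * ((L - wt e)%:R * p + (wt e)%:R * (1 - p)).

Definition Qop (h : config -> R) (e : config) : R :=
  prob1 e * h (shift e true) + prob0 e * h (shift e false).

Lemma natrL_neq0 : (L%:R : R) != 0.
Proof. by rewrite pnatr_eq0; lia. Qed.

Lemma wt_leL (e : config) : (wt e <= L)%N.
Proof.
rewrite /wt -[X in (_ <= X)%N]card_ord -sum1_card.
by apply: leq_sum => j _; apply: leq_b1.
Qed.

Lemma prob1D0 (e : config) : prob1 e + prob0 e = 1.
Proof. by rewrite /prob1 /prob0 natrB ?wt_leL //; field; apply: natrL_neq0. Qed.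

Lemma bit_ord (i : 'I_L) (w : config) : bit i w = (w i : nat)%:R.
Proof. by rewrite /bit valK. Qed.

Lemma bitE k (hk : (k < L)%N) (w : config) : bit k w = (w (Ordinal hk) : nat)%:R.
Proof. by rewrite -bit_ord. Qed.

Lemma bit_shift k (hk : (k < L)%N) (e : config) (s : bool) :
  bit k (shift e s) = if (k.+1 < L)%N then bit k.+1 e else (s : nat)%:R.
Proof.
rewrite bitE /shift ffunE /=.
have [hk1|hk1] := ltnP k.+1 L; first by rewrite insubT bitE.
by rewrite insubF // ltnNge hk1.
Qed.

Lemma shift_true_neq_false (e : config) : shift e true != shift e false.
Proof.
have hk : (L.-1 < L)%N by lia.
apply/eqP => /(congr1 (bit L.-1)).
rewrite !bit_shift // (_ : (L.-1.+1 < L)%N = false) /=; last lia.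
by move/eqP; rewrite eqr_nat.
Qed.

Lemma sum_Q (e : config) (h : config -> R) : \sum_z Q p e z * h z = Qop h e.
Proof.
rewrite (bigD1 (shift e true)) //= (bigD1 (shift e false)) /=; last first.
  by rewrite eq_sym shift_true_neq_false.
rewrite big1 ?addr0 => [|z /andP[h1 h2]]; last by rewrite /Q (negbTE h1) (negbTE h2) mul0r.
by rewrite /Q eqxx eq_sym (negbTE (shift_true_neq_false e)) eqxx.
Qed.

Lemma sum_Qn n (h : config -> R) (e : config) :
  \sum_w Qn p n e w * h w = iter n Qop h e.
Proof.
elim: n h e => [|n IH] h e /=.
  rewrite (bigD1 e) //= eqxx mul1r big1 ?addr0 // => w hw.
  by rewrite eq_sym (negbTE hw) mul0r.
under eq_bigr => w _ do rewrite mulr_suml.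
rewrite exchange_big /=.
under eq_bigr => z _ do (under eq_bigr => w _ do rewrite -mulrA; rewrite -mulr_sumr sum_Q).
by rewrite IH -iterSr.
Qed.

Lemma rhoE n : rho L p n = \sum_(e : config) Defs.pi p e * bit 0 e * iter n Qop (bit 0) e.
Proof.
apply: eq_bigr => e _.
by rewrite -sum_Qn mulr_sumr; apply: eq_bigr => w _; rewrite !mulrA.
Qed.

Lemma Qop_bit k : (k.+1 < L)%N -> Qop (bit k) = bit k.+1.
Proof.
move=> hk; apply: functional_extensionality => e.
by rewrite /Qop !bit_shift ?hk ?(ltnW hk) // -mulrDl prob1D0 mul1r.
Qed.

Lemma iter_Qop_bit0 k : (k < L)%N -> iter k Qop (bit 0) = bit k.
Proof. by elim: k => [//|k IH] hk; rewrite iterS IH ?Qop_bit //; lia. Qed.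

Lemma Qop_bit_last : Qop (bit L.-1) =
  fun e => (1 - p) + (2 * p - 1) / L%:R * \sum_(i < L) bit i e.
Proof.
apply: functional_extensionality => e.
have hk : (L.-1 < L)%N by lia.
rewrite /Qop !bit_shift // (_ : (L.-1.+1 < L)%N = false) /=; last lia.
have -> : \sum_(i < L) bit i e = (wt e)%:R.
  by rewrite /wt natr_sum; apply: eq_bigr => i _; rewrite bit_ord.
rewrite mulr1 mulr0 addr0 /prob1 natrB ?wt_leL //.
by field; apply: natrL_neq0.
Qed.

Lemma iter_Qop_affine j b k (f : 'I_L -> config -> R) :
  iter j Qop (fun e => b + k * \sum_i f i e) =
  fun e => b + k * \sum_i iter j Qop (f i) e.
Proof.
elim: j => [//|j IH]; rewrite iterS IH.
apply: functional_extensionality => e.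
rewrite /Qop big_split /= -!mulr_sumr.
by rewrite -[b in RHS]mul1r -(prob1D0 e); ring.
Qed.

Lemma iter_Qop_bit0_rec n : (L <= n)%N -> iter n Qop (bit 0) =
  fun e => (1 - p) + (2 * p - 1) / L%:R * \sum_(i < L) iter (n - L + i) Qop (bit 0) e.
Proof.
move=> hn; rewrite -{1}(subnK hn) iterD.
have -> : iter L Qop (bit 0) = Qop (bit L.-1).
  by rewrite -[X in iter X _ _](ltn_predK hL) iterS iter_Qop_bit0 //; lia.
rewrite Qop_bit_last iter_Qop_affine.
apply: functional_extensionality => e; congr (_ + _ * _).
by apply: eq_bigr => i _; rewrite iterD iter_Qop_bit0.
Qed.

Definition mean0 : R := \sum_(e : config) Defs.pi p e * bit 0 e.

Lemma rho_rec n : (L <= n)%N -> rho L p n =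
  (1 - p) * mean0 + (2 * p - 1) / L%:R * \sum_(1 <= j < L.+1) rho L p (n - j).
Proof.
move=> hn; rewrite rhoE iter_Qop_bit0_rec //.
have -> : \sum_(1 <= j < L.+1) rho L p (n - j) = \sum_(i < L) rho L p (n - L + i).
  rewrite -(big_mkord xpredT (fun i => rho L p (n - L + i))) big_nat_rev big_add1 /=.
  by apply: eq_big_nat => i /andP[_ hi]; congr rho; lia.
under eq_bigr => e _ do rewrite mulrDr.
rewrite big_split /= /mean0 mulr_sumr; congr (_ + _).
  by apply: eq_bigr => e _; ring.
rewrite mulr_sumr.
under [RHS]eq_bigr => i _ do rewrite rhoE mulr_sumr.
rewrite exchange_big /=; apply: eq_bigr => e _.
by rewrite !mulr_sumr; apply: eq_bigr => i _; ring.
Qed.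

Lemma rho_ltL n : (n < L)%N -> rho L p n =
  \sum_(e : config) Defs.pi p e * bit 0 e * bit n e.
Proof. by move=> hn; rewrite rhoE iter_Qop_bit0. Qed.

End ShiftChain.

Arguments bit {R L}.
Arguments bitE {R L k}.


Section StationarySymmetries.
Variable R : rcfType.
Variables (L : nat) (p : R).
Hypotheses (hL : (2 <= L)%N) (hp0 : 0 <= p) (hp1 : p < 1).

Local Notation config := (config L).

Lemma c_gt0 j : (j < L)%N -> 0 < c L p j.
Proof.
move=> hj; have L0 : (0 : R) < L%:R by rewrite ltr0n; lia.
have h0 : 0 <= j%:R / L%:R :> R by rewrite divr_ge0.
have h1 : j%:R / L%:R < 1 :> R by rewrite ltr_pdivrMr // mul1r ltr_nat.
have : 0 < (1 - p) * (1 - j%:R / L%:R) by rewrite mulr_gt0 // subr_gt0.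
have : 0 <= j%:R / L%:R * p by rewrite mulr_ge0.
rewrite /c; lra.
Qed.

Definition cratio (j : nat) : R := c L p j / c L p (L - j - 1).

Lemma cratio_gt0 j : (j < L)%N -> 0 < cratio j.
Proof. by move=> hj; rewrite divr_gt0 // c_gt0 //; lia. Qed.

Lemma cratio_rev j : (j < L)%N -> cratio (L - j.+1) = (cratio j)^-1.
Proof.
move=> hj; rewrite /cratio invf_div.
have -> : (L - (L - j.+1) - 1 = j)%N by lia.
by have -> : (L - j.+1 = L - j - 1)%N by lia.
Qed.

Definition wprod (k : nat) : R := \prod_(0 <= j < k) cratio j.

Lemma piw_wprod (w : config) : piw p w = wprod (wt w).
Proof. by rewrite /piw /wprod big_mkord. Qed.

Lemma wprod_gt0 k : (k <= L)%N -> 0 < wprod k.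
Proof.
move=> hk; rewrite /wprod big_seq prodr_gt0 // => j.
by rewrite mem_index_iota => /andP[_ hj]; apply: cratio_gt0; lia.
Qed.

(* The factors of wprod L beyond L - k are, in reverse order, the inverses of
   those of wprod k. *)
Lemma wprodL_split k : (k <= L)%N -> wprod L = wprod (L - k) / wprod k.
Proof.
move=> hk; rewrite /wprod (@big_cat_nat _ _ _ (L - k)%N) ?leq_subr //= -prodfV.
rewrite -[X in \prod_(X <= _ < L) _](add0n (L - k)%N) big_addn subKn //.
congr (_ * _); rewrite big_nat_rev; apply: eq_big_nat => j /andP[_ hj].
by rewrite -cratio_rev; [congr cratio|]; lia.
Qed.

Lemma wprod_sym k : (k <= L)%N -> wprod (L - k) = wprod k.
Proof.
move=> hk; have hk' := leq_subr k L.
have h1 := wprodL_split hk; have h2 := wprodL_split hk'; rewrite subKn // in h2.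
have a0 := wprod_gt0 hk'; have b0 := wprod_gt0 hk.
have /eqP : wprod (L - k) / wprod k = wprod k / wprod (L - k) by rewrite -h1 -h2.
by rewrite eqr_div ?(gt_eqF a0) ?(gt_eqF b0) // -!expr2 eqrXn2 ?(ltW a0) ?(ltW b0) // => /eqP.
Qed.

Lemma pi_wt (w1 w2 : config) : wt w1 = wt w2 -> Defs.pi p w1 = Defs.pi p w2.
Proof. by rewrite /Defs.pi !piw_wprod => ->. Qed.

Lemma Z_gt0 : 0 < Z L p.
Proof.
have piw_gt0 (w : config) : 0 < piw p w by rewrite piw_wprod wprod_gt0 ?wt_leL.
rewrite /Z (bigD1 [ffun=> false]) //=.
by apply: lt_le_trans (piw_gt0 [ffun=> false]) _; rewrite lerDl sumr_ge0 // => w _; rewrite ltW.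
Qed.

Lemma sum_pi : \sum_(e : config) Defs.pi p e = 1.
Proof. by rewrite -mulr_suml divff // gt_eqF // Z_gt0. Qed.

Definition flip (e : config) : config := [ffun i => ~~ e i].

Lemma flipK : involutive flip.
Proof. by move=> e; apply/ffunP => i; rewrite !ffunE negbK. Qed.

Lemma wt_flip (e : config) : wt (flip e) = (L - wt e)%N.
Proof.
suff : (wt (flip e) + wt e = L)%N by lia.
rewrite /wt -big_split /= -[RHS]card_ord -sum1_card.
by apply: eq_bigr => i _; rewrite ffunE; case: (e i).
Qed.

Lemma pi_flip (e : config) : Defs.pi p (flip e) = Defs.pi p e.
Proof. by rewrite /Defs.pi !piw_wprod wt_flip wprod_sym ?wt_leL. Qed.

Lemma mean0_half : mean0 L p = 2^-1.
Proof.
have h0 : (0 < L)%N by lia.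
suff : mean0 L p = 1 - mean0 L p by lra.
rewrite {1}/mean0 (reindex_inj (can_inj flipK)) /= -sum_pi /mean0 -sumrB.
apply: eq_bigr => e _; rewrite pi_flip !(bitE h0) ffunE.
by case: (e _); rewrite /= ?mulr1 ?mulr0 ?subr0 ?subrr.
Qed.

Lemma rho0 : rho L p 0 = 2^-1.
Proof.
have h0 : (0 < L)%N by lia.
rewrite rho_ltL // -mean0_half; apply: eq_bigr => e _.
by rewrite (bitE h0); case: (e _); rewrite ?mulr1 ?mulr0.
Qed.

Definition permc (s : {perm 'I_L}) (e : config) : config := [ffun i => e (s i)].

Lemma wt_permc s (e : config) : wt (permc s e) = wt e.
Proof.
rewrite /wt [in RHS](reindex_inj (@perm_inj _ s)) /=.
by apply: eq_bigr => i _; rewrite ffunE.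
Qed.

Lemma rho_const n : (1 <= n <= L - 1)%N -> rho L p n = rho L p 1.
Proof.
move=> /andP[hn1 hn2].
have hn : (n < L)%N by lia.
have h1 : (1 < L)%N by lia.
have h0 : (0 < L)%N by lia.
rewrite !rho_ltL //.
set s := tperm (Ordinal h1) (Ordinal hn).
have sK : involutive (permc s) by move=> e; apply/ffunP => i; rewrite !ffunE tpermK.
rewrite [LHS](reindex_inj (can_inj sK)) /=; apply: eq_bigr => e _.
rewrite (pi_wt (wt_permc s e)) !(bitE h0) (bitE hn) (bitE h1) !ffunE tpermR tpermD //.
by apply/eqP => /(congr1 val) /=; lia.
Qed.

Lemma rhobar_rec n : (L <= n)%N ->
  rhobar L p n = (2 * p - 1) / L%:R * \sum_(1 <= j < L.+1) rhobar L p (n - j).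
Proof.
move=> hn; rewrite /rhobar rho_rec // mean0_half sumrB sumr_const_nat subn1 /= -mulr_natr.
by field; apply: natrL_neq0.
Qed.

End StationarySymmetries.

Theorem mainTheorem15 (R : rcfType) (L : nat) (p : R)
  (hL : (2 <= L)%N) (hp0 : 0 <= p) (hp1 : p < 1) :
  [/\ rho L p 0 = 2^-1,
      (forall n : nat, (1 <= n <= L - 1)%N -> rho L p n = rho L p 1),
      (forall n : nat, (L <= n)%N ->
         rhobar L p n = (2 * p - 1) / L%:R * \sum_(1 <= j < L.+1) rhobar L p (n - j))
    & exists C r : R, [/\ 0 <= r, r < 1 &
         forall n : nat, `|rhobar L p n| <= C * r ^+ n]].
Proof.
have rec := rhobar_rec hL hp0 hp1.
split; [exact: rho0 | exact: rho_const | exact: rec |].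
by apply: (linear_recurrence_decay hL _ _ rec); lra.
Qed.
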